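(* For $0<q<1$ and every integer $k\ge1$, \[ \frac{q^k\prod_{n=1}^{k}(q^{2n}+q^{2k})}{\prod_{n=0}^{k}(1-q^{2n+2k})} = -\,\frac{q^k\,(-q^2;q^2)_k}{(q^{2k}-1)\,(q^2;q^2)_k}\; {}_3\phi_2\!\left(\begin{matrix}-q^{2k+2},\,q^{2k},\,q^{-2k}\\ -q^2,\,q^{2k+2}\end{matrix};q^2,\,q^2\right). \]
   Context: $(a;q)_n=\prod_{i=0}^{n-1}(1-aq^i)$ with $(a;q)_0=1$. Here ${}_3\phi_2\!\left(\begin{smallmatrix}a_1,a_2,a_3\\ b_1,b_2\end{smallmatrix};p,z\right)=\sum_{i\ge0}\frac{(a_1;p)_i(a_2;p)_i(a_3;p)_i}{(b_1;p)_i(b_2;p)_i(p;p)_i}z^i$; with $a_3=q^{-2k}$ and $p=q^2$ the sum terminates at $i=k$. *)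

From mathcomp Require Import all_boot all_order all_algebra.
Set Implicit Arguments. Unset Strict Implicit. Unset Printing Implicit Defensive.
Import Order.TTheory GRing.Theory Num.Theory.
Local Open Scope ring_scope.

Definition qpoch {R : fieldType} (a p : R) (n : nat) : R :=
  \prod_(i < n) (1 - a * p ^+ i).

(* Partial sum of the basic hypergeometric series 3phi2, summed over 0 <= i <= N.
   When a3 = p^{-k} (here p = q^2, a3 = q^{-2k}) the series terminates at i = k,
   so with N = k this equals the full series. *)
Definition phi32_upto {R : fieldType} (a1 a2 a3 b1 b2 p z : R) (N : nat) : R :=
  \sum_(i < N.+1)
    (qpoch a1 p i * qpoch a2 p i * qpoch a3 p i) /
    (qpoch b1 p i * qpoch b2 p i * qpoch p p i) * z ^+ i.

From mathcomp Require Import all_boot all_order all_algebra qpoly ring zify.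
Import Order.TTheory GRing.Theory Num.Theory.
Local Open Scope ring_scope.

(* Write p = q^2 and x = p^k.  The left-hand side is c x^-1 P(x^-1) / prod_(j <= k) (x^-1 - p^j)
   with P(z) = (-p z; p)_k of degree k, so partial fractions over the nodes p^0, ..., p^k
   (Lagrange interpolation) turn it into a sum over i <= k.  Each summand is the i-th term
   of the terminating 3phi2 once one uses
     P(p^i) = (-p^(k+1); p)_i (-p; p)_k / (-p; p)_i,
     (x; p)_i / (p x; p)_i = (1 - x) / (1 - x p^i),
     p^i (x^-1; p)_i prod_(j <= k, j <> i) (p^i - p^j) = (p; p)_k (p; p)_i. *)

Lemma prod_ord_neq_split {R : comPzSemiRingType} (f : nat -> R) n (i : 'I_n) :
  \prod_(j < n | j != i) f j = \prod_(j < i) f j * \prod_(m < n - i.+1) f (i + m.+1)%N.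
Proof.
pose g j := if j != i :> nat then f j else 1.
rewrite big_mkcond (eq_bigr (g \o val)) // -(big_mkord xpredT g).
rewrite (big_cat_nat _ (n := i)) //; last exact: ltnW.
rewrite (big_ltn (ltn_ord i)) /= {2}/g eqxx mul1r -{1}[i.+1]add0n big_addn !big_mkord.
congr (_ * _); apply: eq_bigr => j _; rewrite /g.
  by rewrite neq_ltn ltn_ord.
have -> : (j + i.+1 != i)%N by lia.
by congr f; lia.
Qed.

Section QPochhammer.
Variable R : fieldType.
Implicit Types (a p x : R) (i m n : nat).

Lemma qpoch0 a p : qpoch a p 0 = 1.
Proof. by rewrite /qpoch big_ord0. Qed.

Lemma qpochSl a p n : qpoch a p n.+1 = (1 - a) * qpoch (a * p) p n.
Proof.
rewrite /qpoch big_ord_recl expr0 mulr1; congr (_ * _).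
by apply: eq_bigr => j _; rewrite exprS mulrA.
Qed.

Lemma qpochSr a p n : qpoch a p n.+1 = qpoch a p n * (1 - a * p ^+ n).
Proof. by rewrite /qpoch big_ord_recr. Qed.

Lemma qpochD a p m n : qpoch a p (m + n) = qpoch a p m * qpoch (a * p ^+ m) p n.
Proof.
rewrite /qpoch big_split_ord; congr (_ * _).
by apply: eq_bigr => j _; rewrite /= exprD mulrA.
Qed.

Lemma qpoch_shiftC a p m n :
  qpoch (a * p ^+ m) p n * qpoch a p m = qpoch (a * p ^+ n) p m * qpoch a p n.
Proof. by rewrite mulrC -qpochD addnC qpochD mulrC. Qed.

Lemma qpochV x p n : x != 0 -> x ^+ n * qpoch x^-1 p n = \prod_(j < n) (x - p ^+ j).
Proof.
move=> x0; rewrite /qpoch -{1}(card_ord n) -prodrMl.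
by apply: eq_bigr => j _; rewrite mulrBr mulr1 mulrA mulfV // mul1r.
Qed.

Lemma prod_exprB_below p i r :
  qpoch p p r * \prod_(j < i) (p ^+ (i + r) - p ^+ j)
  = (-1) ^+ i * \prod_(j < i) p ^+ j * qpoch p p (i + r).
Proof.
elim: i => [|i IHi]; first by rewrite !big_ord0 mulr1 expr0 !mul1r.
have shift : \prod_(j < i) (p ^+ (i.+1 + r) - p ^+ j.+1)
             = p ^+ i * \prod_(j < i) (p ^+ (i + r) - p ^+ j).
  transitivity (\prod_(j < i) (p * (p ^+ (i + r) - p ^+ j))).
    by apply: eq_bigr => j _; rewrite addSn !exprS; ring.
  by rewrite prodrMl card_ord.
rewrite big_ord_recl /= shift.
transitivity ((p ^+ (i.+1 + r) - 1) * p ^+ i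
              * (qpoch p p r * \prod_(j < i) (p ^+ (i + r) - p ^+ j))); first by ring.
rewrite IHi [in RHS]big_ord_recr /= addSn qpochSr !exprS; ring.
Qed.

Lemma prod_exprB_above p i n :
  \prod_(m < n) (p ^+ i - p ^+ (i + m.+1)) = (p ^+ i) ^+ n * qpoch p p n.
Proof.
rewrite /qpoch -[X in _ ^+ X * _](card_ord n) -prodrMl; apply: eq_bigr => m _.
by rewrite exprD exprS; ring.
Qed.

Lemma prod_expr_sqr p i : (\prod_(j < i) p ^+ j) ^+ 2 * p ^+ i = p ^+ (i * i).
Proof.
elim: i => [|i IHi]; first by rewrite big_ord0 expr1n mul1r.
have -> : (i.+1 * i.+1 = i * i + i.*2 + 1)%N by lia.
by rewrite big_ord_recr /= !exprD -IHi -muln2 exprM [p ^+ i.+1]exprS; ring.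
Qed.

Lemma prod_nodes_neq p k (i : 'I_k.+1) :
  p ^+ i * \prod_(j < i) (p ^+ k - p ^+ j) * \prod_(j < k.+1 | j != i) (p ^+ i - p ^+ j)
  = (p ^+ k) ^+ i * qpoch p p k * qpoch p p i.
Proof.
have le_ik : (i <= k)%N by rewrite -ltnS.
have below_i := prod_exprB_below p i 0.
rewrite qpoch0 mul1r addn0 in below_i.
have below_k := prod_exprB_below p i (k - i).
rewrite subnKC // in below_k.
rewrite (prod_ord_neq_split (fun j : nat => p ^+ i - p ^+ j)) below_i subSS prod_exprB_above.
transitivity (((-1) ^+ i) ^+ 2 * ((\prod_(j < i) p ^+ j) ^+ 2 * p ^+ i) * (p ^+ i) ^+ (k - i)
              * qpoch p p i * qpoch p p k); last first.
  rewrite exprAC sqrrN !expr1n mul1r prod_expr_sqr -exprM -exprD -exprM.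
  by rewrite (_ : (i * i + i * (k - i) = k * i)%N); [ring | nia].
transitivity (p ^+ i * (p ^+ i) ^+ (k - i) * ((-1) ^+ i * \prod_(j < i) p ^+ j) * qpoch p p i
              * (qpoch p p (k - i) * \prod_(j < i) (p ^+ k - p ^+ j))); first by ring.
by rewrite below_k; ring.
Qed.

End QPochhammer.

Lemma partial_fraction {K : fieldType} (x : nat -> K) n (P : {poly K}) z :
  injective x -> (size P <= n.+1)%N -> (forall j : 'I_n.+1, z != x j) ->
  P.[z] / \prod_(j < n.+1) (z - x j)
  = \sum_(i < n.+1) P.[x i] / ((z - x i) * \prod_(j < n.+1 | j != i) (x i - x j)).
Proof.
move=> x_inj sizeP z_out.
rewrite {1}(lagrange_gen (ltn0Sn n) x_inj sizeP) horner_sum mulr_suml.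
apply: eq_bigr => i _; rewrite lagrangeE //= !hornerCM !horner_prod.
have eval_nodes w : \prod_(j < n.+1 | j != i) ('X - (x j)%:P).[w]
                    = \prod_(j < n.+1 | j != i) (w - x j).
  by apply: eq_bigr => j _; rewrite hornerXsubC.
rewrite !eval_nodes [\prod_(j < n.+1) (z - x j)](bigD1 i) //=.
have nodes_neq0 : \prod_(j < n.+1 | j != i) (x i - x j) != 0.
  by apply/prodf_neq0 => j ji; rewrite subr_eq0 (inj_eq x_inj) eq_sym.
have z_neq0 : \prod_(j < n.+1 | j != i) (z - x j) != 0.
  by apply/prodf_neq0 => j _; rewrite subr_eq0.
have zi_neq0 : z - x i != 0 by rewrite subr_eq0.
by field; rewrite nodes_neq0 z_neq0 zi_neq0.
Qed.

Definition qpoch_poly {R : fieldType} (a p : R) n : {poly R} :=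
  \prod_(i < n) (1 - (a * p ^+ i) *: 'X).

Lemma horner_qpoch_poly (R : fieldType) (a p z : R) n :
  (qpoch_poly a p n).[z] = qpoch (a * z) p n.
Proof.
rewrite horner_prod; apply: eq_bigr => i _.
by rewrite hornerD hornerN hornerZ hornerX hornerC; ring.
Qed.

Lemma size_qpoch_poly (R : fieldType) (a p : R) n : (size (qpoch_poly a p n) <= n.+1)%N.
Proof.
elim: n => [|n IHn]; first by rewrite /qpoch_poly big_ord0 size_poly1.
rewrite /qpoch_poly big_ord_recr /=; apply: leq_trans (size_polyMleq _ _) _.
have size_factor : (size (1 - (a * p ^+ n) *: 'X : {poly R})%R <= 2)%N.
  rewrite (leq_trans (size_polyD _ _)) // size_poly1 size_polyN geq_max /=.
  by rewrite (leq_trans (size_scale_leq _ _)) // size_polyX.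
by rewrite -subn1 leq_subLR add1n -addn2 leq_add.
Qed.

Section UnitInterval.
Variables (R : realFieldType) (p : R).
Hypotheses (p_gt0 : 0 < p) (p_lt1 : p < 1).

Lemma expr_neq1 n : (0 < n)%N -> p ^+ n != 1.
Proof. by move=> n_gt0; rewrite lt_eqF // exprn_ilt1 ?ltW // -lt0n. Qed.

Lemma expr_neq0 n : p ^+ n != 0.
Proof. by rewrite expf_neq0 // gt_eqF. Qed.

Lemma expr_inj : injective (fun j : nat => p ^+ j).
Proof. by apply: ieexprIn => //; rewrite lt_eqF. Qed.

Lemma qpoch_expr_neq0 m n : qpoch (p ^+ m.+1) p n != 0.
Proof.
by apply/prodf_neq0 => j _; rewrite -exprD subr_eq0 eq_sym expr_neq1.
Qed.

Lemma qpoch_Nexpr_neq0 m n : qpoch (- p ^+ m) p n != 0.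
Proof.
apply/prodf_neq0 => j _.
by rewrite mulNr opprK -exprD gt_eqF // addr_gt0 ?ltr01 ?exprn_gt0.
Qed.

Variables (k : nat) (c : R).
Hypothesis k_gt0 : (0 < k)%N.

Lemma subr_exprk_neq0 i : 1 - p ^+ k * p ^+ i != 0.
Proof. by rewrite -exprD subr_eq0 eq_sym expr_neq1 // addn_gt0 k_gt0. Qed.

Lemma prod_ratio_partial_fraction :
  c * \prod_(1 <= n < k.+1) (p ^+ n + p ^+ k) / \prod_(0 <= n < k.+1) (1 - p ^+ (n + k))
  = \sum_(i < k.+1) c * qpoch (- p * p ^+ i) p k
      / ((1 - p ^+ k * p ^+ i) * \prod_(j < k.+1 | j != i) (p ^+ i - p ^+ j)).
Proof.
have x_neq0 := expr_neq0 k; set x := p ^+ k in x_neq0 *.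
have z_out (j : 'I_k.+1) : x^-1 != p ^+ j.
  by apply: contraTneq (subr_exprk_neq0 j) => <-; rewrite mulfV ?subrr ?eqxx.
have num : \prod_(1 <= n < k.+1) (p ^+ n + x) = x ^+ k * qpoch (- p * x^-1) p k.
  rewrite big_add1 /= big_mkord /qpoch -[X in _ ^+ X * _](card_ord k) -prodrMl.
  by apply: eq_bigr => n _; rewrite exprS; field.
have den : \prod_(0 <= n < k.+1) (1 - p ^+ (n + k))
           = x ^+ k.+1 * \prod_(j < k.+1) (x^-1 - p ^+ j).
  rewrite big_mkord -[X in _ ^+ X * _](card_ord k.+1) -prodrMl.
  by apply: eq_bigr => n _; rewrite exprD -/x; field.
have den_neq0 : \prod_(j < k.+1) (x^-1 - p ^+ j) != 0.
  by apply/prodf_neq0 => j _; rewrite subr_eq0.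
rewrite num den -horner_qpoch_poly.
transitivity (c / x * ((qpoch_poly (- p) p k).[x^-1] / \prod_(j < k.+1) (x^-1 - p ^+ j))).
  by rewrite exprS; field; rewrite den_neq0 x_neq0 expf_neq0.
rewrite (partial_fraction (fun j => p ^+ j)) ?size_qpoch_poly //; last exact: expr_inj.
rewrite mulr_sumr; apply: eq_bigr => i _; rewrite horner_qpoch_poly.
have nodes_neq0 : \prod_(j < k.+1 | j != i) (p ^+ i - p ^+ j) != 0.
  by apply/prodf_neq0 => j ji; rewrite subr_eq0 (inj_eq expr_inj) eq_sym.
by field; rewrite nodes_neq0 subr_exprk_neq0 x_neq0.
Qed.

Lemma phi32_term (i : 'I_k.+1) :
  - (c * qpoch (- p) p k) / ((p ^+ k - 1) * qpoch p p k)
  * ((qpoch (- p ^+ k.+1) p i * qpoch (p ^+ k) p i * qpoch (p ^+ k)^-1 p i)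
     / (qpoch (- p) p i * qpoch (p ^+ k.+1) p i * qpoch p p i) * p ^+ i)
  = c * qpoch (- p * p ^+ i) p k
      / ((1 - p ^+ k * p ^+ i) * \prod_(j < k.+1 | j != i) (p ^+ i - p ^+ j)).
Proof.
have x_neq0 := expr_neq0 k; set x := p ^+ k in x_neq0 *.
set D := \prod_(j < k.+1 | j != i) _.
have D_neq0 : D != 0.
  by apply/prodf_neq0 => j ji; rewrite subr_eq0 (inj_eq expr_inj) eq_sym.
have pi_neq0 := expr_neq0 i.
have x_neq1 : x - 1 != 0 by rewrite subr_eq0 expr_neq1.
have [Qk_neq0 Qi_neq0] := (qpoch_expr_neq0 0 k, qpoch_expr_neq0 0 i).
have [Ak_neq0 Ai_neq0] := (qpoch_Nexpr_neq0 1 k, qpoch_Nexpr_neq0 1 i).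
have -> : qpoch (- p ^+ k.+1) p i
          = qpoch (- p * p ^+ i) p k * qpoch (- p) p i / qpoch (- p) p k.
  by rewrite -qpoch_shiftC mulNr -exprS mulfK.
have -> : qpoch x p i = (1 - x) * qpoch (p ^+ k.+1) p i / (1 - x * p ^+ i).
  by rewrite exprSr -/x -qpochSl qpochSr mulfK ?subr_exprk_neq0.
have -> : qpoch x^-1 p i = qpoch p p k * qpoch p p i / (p ^+ i * D).
  apply: (mulIf (mulf_neq0 pi_neq0 D_neq0)); apply: (mulfI (expf_neq0 i x_neq0)).
  rewrite divfK ?mulf_neq0 //.
  transitivity (p ^+ i * (x ^+ i * qpoch x^-1 p i) * D); first by ring.
  by rewrite qpochV // prod_nodes_neq mulrA.
by field; rewrite D_neq0 subr_exprk_neq0 Qi_neq0 qpoch_expr_neq0 Ai_neq0 pi_neq0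
  Ak_neq0 Qk_neq0 x_neq1.
Qed.

Lemma prod_ratio_eq_phi32 :
  c * \prod_(1 <= n < k.+1) (p ^+ n + p ^+ k) / \prod_(0 <= n < k.+1) (1 - p ^+ (n + k))
  = - (c * qpoch (- p) p k) / ((p ^+ k - 1) * qpoch p p k)
    * phi32_upto (- p ^+ k.+1) (p ^+ k) (p ^+ k)^-1 (- p) (p ^+ k.+1) p p k.
Proof.
rewrite prod_ratio_partial_fraction /phi32_upto mulr_sumr.
by apply: eq_bigr => i _; rewrite phi32_term.
Qed.

End UnitInterval.

Theorem mainTheorem2 (R : realFieldType) (q : R) (k : nat) :
  0 < q -> q < 1 -> (1 <= k)%N ->
  q ^+ k * (\prod_(1 <= n < k.+1) (q ^+ (2 * n) + q ^+ (2 * k)))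
    / (\prod_(0 <= n < k.+1) (1 - q ^+ (2 * n + 2 * k)))
  = - (q ^+ k * qpoch (- q ^+ 2) (q ^+ 2) k)
      / ((q ^+ (2 * k) - 1) * qpoch (q ^+ 2) (q ^+ 2) k)
    * phi32_upto (- q ^+ (2 * k + 2)) (q ^+ (2 * k)) (q ^+ (2 * k))^-1
                 (- q ^+ 2) (q ^+ (2 * k + 2)) (q ^+ 2) (q ^+ 2) k.
Proof.
move=> q_gt0 q_lt1 k_gt0.
have sqr_expr n : q ^+ (2 * n) = (q ^+ 2) ^+ n by rewrite exprM.
have -> : q ^+ (2 * k + 2) = (q ^+ 2) ^+ k.+1 by rewrite -sqr_expr mulnS addnC.
under eq_bigr do rewrite !sqr_expr.
under [in X in _ / X]eq_bigr do rewrite -mulnDr sqr_expr.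
rewrite !sqr_expr; apply: prod_ratio_eq_phi32 => //.
- by rewrite exprn_gt0.
- by rewrite exprn_ilt1 ?ltW.
Qed.
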